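(* Let $G=\langle S_k\mid K\rangle$ be a finitely generated semigroup as described in the context with $K$ primitive, $\mathcal{A}$ a finite alphabet, and $X_{\mathbf{A}}$ a hom Markov tree shift on $G$ with $\mathbf{A}=(A,A,\dots,A)$. Let $\mathbf{G}=(\mathbf{V},\mathbf{E})$ be the graph representation of $X_{\mathbf{A}}$. Then (i) $\mathbf{G}$ is strongly connected if and only if $A$ is irreducible; (ii) $\mathbf{G}$ is strongly connected and contains a pivot if and only if $A$ is primitive.
   Context: Let $K$ be a $k\times k$ $\{0,1\}$-matrix indexed by $S_k=\{s_1,\dots,s_k\}$ and $G=\langle S_k\mid K\rangle$ the semigroup generated by $S_k$ with relations $s_is_j=1_G$ iff $K(s_i,s_j)=0$. Every $g\in G$ has a unique minimal representation $g=g_1\cdots g_n$ ($g_l\in S_k$, $K(g_l,g_{l+1})=1$), $|g|=n$. For a $k$-tuple $\mathbf{A}=(A_1,\dots,A_k)$ of $\{0,1\}$-matrices indexed by $\mathcal{A}$, $X_{\mathbf{A}}=\{t\in\mathcal{A}^G: A_i(t_g,t_{gs_i})=1 \text{ for all } g,i \text{ with } |gs_i|=|g|+1\}$; it is a hom Markov tree shift if all $A_i$ equal a single matrix $A$. The graph representation of $X_{\mathbf{A}}$ is the directed graph with vertex set $\mathbf{V}=\mathcal{A}\times S_k$ and edge set $\mathbf{E}=\{((a,s_i),(b,s_j)): K(s_i,s_j)=1,\ A_j(a,b)=1\}$. $\mathbf{G}$ is strongly connected if for all $(a,s_i),(b,s_j)\in\mathbf{V}$ there is a walk (of some positive length) from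 $(a,s_i)$ to $(b,s_j)$. A vertex $(a,s_i)$ is a pivot if there exist $s_j\in S_k$ and $N\in\mathbb{N}$ such that for every $b\in\mathcal{A}$ there is a walk of length exactly $N$ from $(a,s_i)$ to $(b,s_j)$. A nonnegative square matrix is irreducible if for each pair of indices $(i,j)$ some power has positive $(i,j)$ entry, and primitive if some power has all entries positive. *)

From mathcomp Require Import all_boot all_algebra.
Set Implicit Arguments. Unset Strict Implicit. Unset Printing Implicit Defensive.
Import GRing.Theory.
Local Open Scope ring_scope.

Definition zero_one_mx (m : nat) (M : 'M[nat]_m) : Prop :=
  forall i j, (M i j <= 1)%N.

Definition irreducible_mx (m : nat) (M : 'M[nat]_m) : Prop :=
  forall i j, exists p : nat, (0 < p)%N /\ (0 < (M ^+ p) i j)%N.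

Definition primitive_mx (m : nat) (M : 'M[nat]_m) : Prop :=
  exists p : nat, (0 < p)%N /\ forall i j, (0 < (M ^+ p) i j)%N.

(* Graph representation of the hom Markov tree shift X_{(A,...,A)} on
   G = <S_k | K>: vertices (a, s_i) in 'I_n * 'I_k (alphabet 'I_n), and an
   edge (a,s_i) -> (b,s_j) iff K(s_i,s_j) = 1 and A(a,b) = 1. *)
Definition graph_rep_edge (n k : nat) (K : 'M[nat]_k) (A : 'M[nat]_n) :
  rel ('I_n * 'I_k) :=
  fun u v => (K u.2 v.2 == 1%N) && (A u.1 v.1 == 1%N).

Definition walk_of_length (V : eqType) (e : rel V) (N : nat) (u v : V) : Prop :=
  exists p : seq V, [/\ size p = N, path e u p & last u p = v].

Definition strongly_connected (V : finType) (e : rel V) : Prop :=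
  forall u v : V, exists N, (0 < N)%N /\ walk_of_length e N u v.

Definition is_pivot (n k : nat) (e : rel ('I_n * 'I_k)) (x : 'I_n * 'I_k) : Prop :=
  exists (j : 'I_k) (N : nat), forall b : 'I_n, walk_of_length e N x (b, j).

(* The graph representation is the tensor product of the graph of K (on the
   generators) and the graph of A (on the alphabet): a walk in it is a pair of
   walks of equal length.  Since K is primitive, K-walks exist of every large
   length, so only the A-component matters.  An irreducible A has closed walks
   at every vertex, hence A-walks between two given letters of arbitrarily large
   length, which gives (i).  For (ii), a pivot (a, s_i) yields an N with A-walks
   of length N from a to every letter; as every letter has an A-predecessor,
   the same holds for every length >= N, and prefixing walks into a shows that
   every letter reaches every letter in all sufficiently large lengths. *)
From mathcomp Require Import all_boot all_algebra.
From Stdlib Require Import Setoid.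
Import GRing.Theory.
Set Implicit Arguments. Unset Strict Implicit.

Section Walks.
Variables (V : eqType) (e : rel V).
Local Notation walk := (walk_of_length e).

Lemma walk0 u v : walk 0 u v <-> u = v.
Proof.
split; first by case=> [[|? ?] [//= _ _ ->]].
by move=> ->; exists [::].
Qed.

Lemma walkS N u v : walk N.+1 u v <-> exists2 w, e u w & walk N w v.
Proof.
split.
  by case=> [[|w p] [//= [<-] /andP[euw pw] <-]]; exists w => //; exists p.
by case=> w euw [p [<- pw <-]]; exists (w :: p); rewrite /= euw.
Qed.

Lemma walk_cat m n u w v : walk m u w -> walk n w v -> walk (m + n) u v.
Proof.
elim: m u => [|m IHm] u; first by move/walk0=> ->.
by case/walkS=> x eux wx wv; apply/walkS; exists x => //; apply: IHm wx wv.
Qed.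

Lemma walk_split m n u v : walk (m + n) u v -> exists2 w, walk m u w & walk n w v.
Proof.
elim: m u => [|m IHm] u; first by exists u => //; apply/walk0.
rewrite addSn => /walkS[x eux /IHm[w wxw wwv]].
by exists w => //; apply/walkS; exists x.
Qed.

Lemma walkSr N u v : walk N.+1 u v <-> exists2 w, walk N u w & e w v.
Proof.
split; first by rewrite -addn1 => /walk_split[w uw /walkS[x ewx /walk0 <-]]; exists w.
case=> w uw ewv; rewrite -addn1; apply: walk_cat uw _.
by apply/walkS; exists v => //; apply/walk0.
Qed.

Lemma walk_cycle_iter t c v : walk c v v -> walk (t * c) v v.
Proof.
move=> cyc; elim: t => [|t IHt]; first by apply/walk0.
by rewrite mulSn; apply: walk_cat cyc IHt.
Qed.

Lemma walk_to_all_ge m m' x :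
  (forall v, exists u, e u v) -> (forall v, walk m x v) ->
  (m <= m')%N -> forall v, walk m' x v.
Proof.
move=> has_pred xm /subnK <-; elim: (m' - m)%N => [|d IHd] v; first exact: xm.
have [u euv] := has_pred v.
by rewrite addSn; apply/walkSr; exists u.
Qed.

End Walks.

Lemma uniform_threshold (T : finType) (P : T -> nat -> Prop) :
  (forall c, exists M, forall m, (M <= m)%N -> P c m) ->
  exists M, forall c m, (M <= m)%N -> P c m.
Proof.
move=> thr; suff [M HM] : exists M, forall c, c \in enum T ->
    forall m, (M <= m)%N -> P c m.
  by exists M => c; apply: HM; rewrite mem_enum.
elim: (enum T) => [|c s [M HM]]; first by exists 0%N.
have [Mc HMc] := thr c.
exists (maxn Mc M) => d; rewrite inE => /predU1P[-> | ds] m.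
  by rewrite geq_max => /andP[leMcm _]; apply: HMc.
by rewrite geq_max => /andP[_ leMm]; apply: HM.
Qed.

Section StronglyConnected.
Variables (V : finType) (e : rel V).
Hypothesis e_sc : strongly_connected e.
Local Notation walk := (walk_of_length e).

Lemma strongly_connected_pred v : exists u, e u v.
Proof.
have [[|N] [//= _ /walkSr[u _ euv]]] := e_sc v v.
by exists u.
Qed.

Lemma strongly_connected_long_walk L u v : exists2 N, (L <= N)%N & walk N u v.
Proof.
have [N [_ uv]] := e_sc u v; have [c [c_gt0 cyc]] := e_sc v v.
exists (N + L * c)%N; first by rewrite (leq_trans (leq_pmulr L c_gt0)) ?leq_addl.
exact: walk_cat uv (walk_cycle_iter L cyc).
Qed.

Lemma strongly_connected_pivot x N :
  (forall v, walk N x v) -> exists M, forall m, (M <= m)%N -> forall u v, walk m u v.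
Proof.
move=> pivot; have x_ge := walk_to_all_ge strongly_connected_pred pivot.
have [M HM] : exists M, forall u m, (M <= m)%N -> forall v, walk m u v.
  apply: uniform_threshold => u; have [L [_ ux]] := e_sc u x.
  exists (L + N)%N => m leLNm v.
  rewrite -(subnKC (leq_trans (leq_addr N L) leLNm)).
  by apply: walk_cat ux (x_ge _ _ v); rewrite leq_subRL // (leq_trans (leq_addr N L)).
by exists M => m leMm u; apply: HM.
Qed.

End StronglyConnected.

Definition mx_edge n (M : 'M[nat]_n) : rel 'I_n := fun i j => M i j == 1%N.

Section ZeroOneMatrix.
Variables (n : nat) (M : 'M[nat]_n).
Hypothesis M01 : zero_one_mx M.
Local Notation walk := (walk_of_length (mx_edge M)).

Lemma expmx_gt0_walk p i j : (0 < (M ^+ p)%R i j)%N <-> walk p i j.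
Proof.
elim: p i j => [|p IHp] i j.
  rewrite expr0 mxE; split; first by case: eqP => // -> _; apply/walk0.
  by move/walk0=> ->; rewrite eqxx.
rewrite exprS -mulmxE mxE lt0n sum_nat_eq0 walkS; split.
  case/forallPn=> l /=; rewrite -lt0n muln_gt0 => /andP[Mil Mlj].
  by exists l; [rewrite /mx_edge eqn_leq M01 | apply/IHp].
case=> l /eqP Mil /IHp Mlj; apply/forallPn; exists l => /=.
by rewrite -lt0n muln_gt0 Mil Mlj.
Qed.

Lemma irreducible_mx_strongly_connected :
  irreducible_mx M <-> strongly_connected (mx_edge M).
Proof.
by split=> irr i j; have [p [p_gt0 /expmx_gt0_walk wij]] := irr i j; exists p.
Qed.

Lemma primitive_mx_walk :
  primitive_mx M <-> exists2 p, (0 < p)%N & forall i j, walk p i j.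
Proof.
split; first by case=> p [p_gt0 Mp]; exists p => // i j; apply/expmx_gt0_walk.
by case=> p p_gt0 wp; exists p; split=> // i j; apply/expmx_gt0_walk.
Qed.

Lemma primitive_mx_strongly_connected :
  primitive_mx M -> strongly_connected (mx_edge M).
Proof. by case/primitive_mx_walk=> p p_gt0 wp i j; exists p. Qed.

Lemma primitive_mx_walk_ge :
  primitive_mx M -> exists p, forall m, (p <= m)%N -> forall i j, walk m i j.
Proof.
move=> prim; have [p _ wp] := primitive_mx_walk.1 prim.
have has_pred := strongly_connected_pred (primitive_mx_strongly_connected prim).
by exists p => m lepm i; apply: walk_to_all_ge has_pred (wp i) lepm.
Qed.

End ZeroOneMatrix.

Lemma graph_rep_walk k n (K : 'M[nat]_k) (A : 'M[nat]_n) N u v :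
  walk_of_length (graph_rep_edge K A) N u v <->
  walk_of_length (mx_edge A) N u.1 v.1 /\ walk_of_length (mx_edge K) N u.2 v.2.
Proof.
elim: N u => [|N IHN] [a i].
  by rewrite !walk0; case: v => b j /=; split=> [[-> ->] | [-> ->]].
rewrite !walkS; split.
  by case=> w /andP[Kw Aw] /IHN[wA wK]; split; [exists w.1 | exists w.2].
case=> -[b Ab wA] [j Kj wK]; exists (b, j); last exact/IHN.
by apply/andP.
Qed.

Lemma graph_rep_strongly_connected k n (K : 'M[nat]_k) (A : 'M[nat]_n) :
  (0 < k)%N -> zero_one_mx K -> zero_one_mx A -> primitive_mx K ->
  strongly_connected (graph_rep_edge K A) <-> irreducible_mx A.
Proof.
move=> k_gt0 K01 A01 primK; pose i0 : 'I_k := Ordinal k_gt0.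
have [pK walkK] := primitive_mx_walk_ge K01 primK.
rewrite irreducible_mx_strongly_connected //; split=> sc.
  move=> a b; have [N [N_gt0 /graph_rep_walk[wA _]]] := sc (a, i0) (b, i0).
  by exists N.
move=> [a i] [b j]; have [N] := strongly_connected_long_walk sc (maxn pK 1) a b.
rewrite geq_max => /andP[lepN N_gt0] wA.
by exists N; split=> //; apply/graph_rep_walk; split=> //; apply: walkK.
Qed.

Theorem proposition5p3 (k n : nat) (K : 'M[nat]_k) (A : 'M[nat]_n) :
  (0 < k)%N -> (0 < n)%N ->
  zero_one_mx K -> zero_one_mx A -> primitive_mx K ->
  (strongly_connected (graph_rep_edge K A) <-> irreducible_mx A) /\
  ((strongly_connected (graph_rep_edge K A) /\
    exists x, is_pivot (graph_rep_edge K A) x) <-> primitive_mx A).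
Proof.
move=> k_gt0 n_gt0 K01 A01 primK.
have part_i := graph_rep_strongly_connected k_gt0 K01 A01 primK.
split=> //; split.
  case=> sc [[a i] [j [N pivot]]].
  have scA := (irreducible_mx_strongly_connected A01).1 (part_i.1 sc).
  have pivotA b : walk_of_length (mx_edge A) N a b.
    by case/graph_rep_walk: (pivot b).
  have [M walkA] := strongly_connected_pivot scA pivotA.
  apply/primitive_mx_walk => //; exists (maxn M 1); first by rewrite leq_maxr.
  by move=> a' b'; apply: walkA; rewrite leq_maxl.
move=> primA; split.
  apply/part_i/(irreducible_mx_strongly_connected A01).
  exact: primitive_mx_strongly_connected.
have [pA walkA] := primitive_mx_walk_ge A01 primA.
have [pK walkK] := primitive_mx_walk_ge K01 primK.
exists (Ordinal n_gt0, Ordinal k_gt0), (Ordinal k_gt0), (maxn pA pK) => b.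
apply/graph_rep_walk; split; [apply: walkA | apply: walkK].
  exact: leq_maxl.
exact: leq_maxr.
Qed.
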